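(* Let $F$ and $G$ be Fourier matrices of the same size $N$, with indexing groups $I_F$ and $I_G$, and let $\chi',\chi'':I_G\to I_F$ be bijections. If $P_{\chi'}\,F\,P_{\chi''}^T=G$, then $\chi'$ and $\chi''$ are group isomorphisms.
   Context: For $n\ge1$, $F_n$ is the $n\times n$ matrix with rows and columns indexed by $\mathbb Z_n$ and entries $(F_n)_{i,j}=e^{2\pi i\,\tilde i\tilde j/n}$ ($\tilde i,\tilde j$ any integer representatives). A Fourier matrix is $F=F_{N_1}\otimes\cdots\otimes F_{N_r}$ of size $N=N_1\cdots N_r$, indexed by its indexing group $I_F=\mathbb Z_{N_1}\times\cdots\times\mathbb Z_{N_r}$: for $i=(i_1,\dots,i_r),j=(j_1,\dots,j_r)\in I_F$, $F_{i,j}=\prod_x (F_{N_x})_{i_x,j_x}$, and group index $i$ corresponds to the position of $i$ in the lexicographic order of $I_F$. For Fourier matrices $F,G$ of size $N$ and a bijection $\varphi:I_G\to I_F$, $P_\varphi$ is the $N\times N$ permutation matrix whose rows are indexed by $I_G$ and columns by $I_F$, with $(P_\varphi)_{i,\varphi(i)}=1$ for all $i\in I_G$ and zeros elsewhere. *)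

From HB Require Import structures.
From mathcomp Require Import all_boot all_order all_algebra.
From mathcomp Require Import all_classical all_reals all_analysis.
From mathcomp Require Import complex.
Set Implicit Arguments. Unset Strict Implicit. Unset Printing Implicit Defensive.
Import Order.TTheory GRing.Theory Num.Theory.
Local Open Scope ring_scope.

(* A list ns = [:: n_1; ...; n_r] encodes the moduli N_x = n_x + 1 >= 1.
   The indexing group I_F = Z_{N_1} x ... x Z_{N_r}: elements are dependent
   finite functions x |-> i_x in 'I_(N_x) (= Z_{N_x}, canonically a zmodType). *)
Definition idx (ns : seq nat) : finType :=
  {dffun forall x : 'I_(size ns), 'I_(nth 0%N ns x).+1}.

Definition fsize (ns : seq nat) : nat := \prod_(n <- ns) n.+1.

Definition idx_add (ns : seq nat) (i j : idx ns) : idx ns :=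
  [ffun x => (i x + j x)%R].

Definition group_iso (ns ms : seq nat) (f : idx ns -> idx ms) : Prop :=
  bijective f /\ forall a b, f (idx_add a b) = idx_add (f a) (f b).

Definition expi (R : realType) (t : R) : R[i] := (cos t +i* sin t)%C.

Definition fmx (R : realType) (T U : finType) := T -> U -> R[i].

Definition fmul (R : realType) (T U V : finType) (A : fmx R T U) (B : fmx R U V)
  : fmx R T V := fun t v => \sum_(u : U) A t u * B u v.

Definition ftr (R : realType) (T U : finType) (A : fmx R T U) : fmx R U T :=
  fun u t => A t u.

(* The Fourier matrix F = F_{N_1} (x) ... (x) F_{N_r}, indexed by I_F:
   F_{i,j} = prod_x exp(2 pi i i_x j_x / N_x). *)
Definition fourier (R : realType) (ns : seq nat) : fmx R (idx ns) (idx ns) :=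
  fun i j => \prod_(x < size ns)
     expi (2 * pi * ((i x : nat) * (j x : nat))%:R / ((nth 0%N ns x).+1)%:R).

Definition permmx (R : realType) (ms ns : seq nat) (phi : idx ms -> idx ns)
  : fmx R (idx ms) (idx ns) := fun i a => if phi i == a then 1 else 0.

Arguments fourier R ns : clear implicits.
Arguments permmx R {ms ns} phi.

From HB Require Import structures.
From mathcomp Require Import all_boot all_order all_algebra.
From mathcomp Require Import all_classical all_reals all_analysis.
From mathcomp Require Import complex.
From mathcomp Require Import ring lra.
Set Implicit Arguments. Unset Strict Implicit. Unset Printing Implicit Defensive.
Import Order.TTheory GRing.Theory Num.Theory.
Local Open Scope ring_scope.

(* The entries F_{a,w} form a bicharacter of I_F that is nondegenerate: the
   rows of distinct group elements differ.  The hypothesis says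
   F_{chi' g, chi'' h} = G_{g,h}; hence the row of chi'(g + g') and the row of
   chi' g + chi' g' agree on every column chi'' h, i.e. on all of I_F since
   chi'' is onto, so chi' is additive.  Exchanging the roles of rows and
   columns (F and G are symmetric) gives the same for chi''. *)

Section RootsOfUnity.
Variable R : realType.

Lemma expiD (s t : R) : expi (s + t) = expi s * expi t.
Proof.
rewrite /expi cosD sinD; apply/eqP; rewrite eq_complex /=.
by rewrite eqxx /= [_ * sin t]mulrC addrC eqxx.
Qed.

Lemma expi0 : expi (0 : R) = 1.
Proof. by rewrite /expi cos0 sin0. Qed.

Lemma expi_neq0 (t : R) : expi t != 0.
Proof.
apply/eqP => t0; have := expiD t (- t).
by rewrite subrr expi0 t0 mul0r => /eqP; rewrite oner_eq0.
Qed.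

Lemma expi_2pi_nat (q : nat) : expi (2 * pi * q%:R : R) = 1.
Proof.
elim: q => [|q IHq]; first by rewrite mulr0 expi0.
rewrite -[q.+1%:R]natr1 mulrDr mulr1 expiD IHq mul1r.
by rewrite /expi mulr_natl cos2pi sin2pi.
Qed.

(* If t = 2s with 0 < s < pi, then cos t = 1 forces cos s ^+ 2 = 1, hence
   sin s = 0, which is impossible. *)
Lemma expi_neq1 (t : R) : 0 < t < pi *+ 2 -> expi t != 1.
Proof.
move=> /andP[t_gt0 t_lt2pi]; set s := t / 2.
have s_pi : 0 < s < pi by rewrite divr_gt0 //= ltr_pdivrMr // mulr_natr.
have -> : t = s *+ 2 by rewrite /s mulr2n; field.
rewrite /expi eq_complex /= cos_mulr2n negb_and; apply/orP; left.
apply/negP => /eqP cos2s.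
have : sin s ^+ 2 = 0 by rewrite sin2cos2; apply/eqP; rewrite subr_eq0; lra.
move/eqP; rewrite expf_eq0 /= => /eqP sin_s0.
by have := sin_gt0_pi s_pi; rewrite sin_s0 ltxx.
Qed.

Definition omega (N k : nat) : R[i] := expi (2 * pi * k%:R / N%:R).

Lemma omega0 N : omega N 0 = 1.
Proof. by rewrite /omega mulr0 mul0r expi0. Qed.

Lemma omegaD N k l : omega N (k + l) = omega N k * omega N l.
Proof. by rewrite /omega -expiD natrD mulrDr mulrDl. Qed.

Lemma omega_neq0 N k : omega N k != 0.
Proof. exact: expi_neq0. Qed.

Lemma omega_modn N k : (0 < N)%N -> omega N (k %% N) = omega N k.
Proof.
move=> N_gt0; rewrite {2}(divn_eq k N) omegaD /omega natrM mulrA mulfK.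
  by rewrite expi_2pi_nat mul1r.
by rewrite pnatr_eq0 -lt0n.
Qed.

Lemma omega_neq1 N k : (0 < k < N)%N -> omega N k != 1.
Proof.
case/andP=> k_gt0 k_ltN.
have N_gt0 : (0 : R) < N%:R by rewrite ltr0n (ltn_trans k_gt0).
apply: expi_neq1; apply/andP; split.
  by rewrite divr_gt0 // mulr_gt0 ?mulr_gt0 ?pi_gt0 ?ltr0n.
by rewrite ltr_pdivrMr // -(mulr_natl pi 2) ltr_pM2l ?ltr_nat // mulr_gt0 ?pi_gt0.
Qed.

Lemma omega_inj N k l : (k < N)%N -> (l < N)%N -> omega N k = omega N l -> k = l.
Proof.
wlog kl : k l / (k <= l)%N => [wlog_kl k_ltN l_ltN eq_kl|k_ltN l_ltN].
  case: (leqP k l) => [kl|/ltnW lk]; first exact: wlog_kl.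
  exact/esym/wlog_kl.
rewrite -(subnKC kl) omegaD -{1}[omega N k]mulr1.
move=> /(mulfI (omega_neq0 _ _)) /esym.
case: (posnP (l - k)) => [->|lk_gt0 lk1]; first by rewrite addn0.
have lk_ltN : (l - k < N)%N := leq_ltn_trans (leq_subr k l) l_ltN.
by have := @omega_neq1 N (l - k); rewrite lk_gt0 lk_ltN lk1 eqxx => /(_ isT).
Qed.

Lemma omega_ord_inj n (i j : 'I_n.+1) :
  omega n.+1 (i * @inord n 1) = omega n.+1 (j * @inord n 1) -> i = j.
Proof.
case: n i j => [|n] i j; first by rewrite !ord1.
by rewrite inordK // !muln1 => /omega_inj eq_ij; apply/val_inj/eq_ij.
Qed.

End RootsOfUnity.

Section FourierBicharacter.
Variables (R : realType) (ns : seq nat).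
Local Notation F := (fourier R ns).

Lemma fourierE (a w : idx ns) :
  F a w = \prod_(x < size ns) omega R (nth 0%N ns x).+1 (a x * w x).
Proof. by []. Qed.

Lemma fourierC (a w : idx ns) : F a w = F w a.
Proof. by rewrite !fourierE; apply: eq_bigr => x _; rewrite mulnC. Qed.

Lemma fourierDl (a b w : idx ns) : F (idx_add a b) w = F a w * F b w.
Proof.
rewrite !fourierE -big_split; apply: eq_bigr => x _ /=.
by rewrite ffunE -omegaD -mulnDl -omega_modn // modnMml omega_modn.
Qed.

(* The column e with e x = 1 and e y = 0 otherwise reads off omega^(a x),
   which determines a x. *)
Lemma fourier_row_inj (a b : idx ns) : (forall w, F a w = F b w) -> a = b.
Proof.
move=> eq_ab; apply/ffunP => x; set n := nth 0%N ns x.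
pose e : idx ns := [ffun y => if y == x then inord 1 else ord0].
have Fe c : F c e = omega R n.+1 (c x * @inord n 1).
  rewrite fourierE (bigD1 x) //= big1 => [|y /negbTE yx].
    by rewrite ffunE eqxx mulr1.
  by rewrite ffunE yx muln0 omega0.
by have := eq_ab e; rewrite !Fe; apply: omega_ord_inj.
Qed.

End FourierBicharacter.

Lemma sum_delta_mull (V : pzSemiRingType) (T : finType) (c : T) (f : T -> V) :
  \sum_u (if c == u then 1 else 0) * f u = f c.
Proof.
rewrite (bigD1 c) //= eqxx mul1r big1 ?addr0 // => u.
by rewrite eq_sym => /negbTE ->; rewrite mul0r.
Qed.

Lemma sum_delta_mulr (V : pzSemiRingType) (T : finType) (c : T) (f : T -> V) :
  \sum_u f u * (if c == u then 1 else 0) = f c.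
Proof.
rewrite (bigD1 c) //= eqxx mulr1 big1 ?addr0 // => u.
by rewrite eq_sym => /negbTE ->; rewrite mulr0.
Qed.

Lemma permmx_conjE (R : realType) (ms ns : seq nat) (phi psi : idx ms -> idx ns)
    (A : fmx R (idx ns) (idx ns)) (g h : idx ms) :
  fmul (fmul (permmx R phi) A) (ftr (permmx R psi)) g h = A (phi g) (psi h).
Proof.
rewrite /fmul /ftr /permmx; under eq_bigr do rewrite sum_delta_mull.
exact: sum_delta_mulr.
Qed.

Lemma fourier_pullback_morph (R : realType) (nsF nsG : seq nat)
    (chi psi : idx nsG -> idx nsF) (psi' : idx nsF -> idx nsG) :
    cancel psi' psi ->
    (forall g h, fourier R nsF (chi g) (psi h) = fourier R nsG g h) ->
  {morph chi : a b / idx_add a b}.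
Proof.
move=> psi'K eq_FG a b; apply: (@fourier_row_inj R) => w.
by rewrite -(psi'K w) eq_FG fourierDl fourierDl !eq_FG.
Qed.

Theorem lemma4p3 (R : realType) (nsF nsG : seq nat)
  (hsize : fsize nsF = fsize nsG)
  (chi' chi'' : idx nsG -> idx nsF)
  (bij' : bijective chi') (bij'' : bijective chi'')
  (hP : fmul (fmul (permmx R chi') (fourier R nsF)) (ftr (permmx R chi''))
        = fourier R nsG) :
  group_iso chi' /\ group_iso chi''.
Proof.
have eq_FG g h : fourier R nsF (chi' g) (chi'' h) = fourier R nsG g h.
  by rewrite -hP permmx_conjE.
have [[g1 _ g1K] [g2 _ g2K]] := (bij', bij'').
split; split=> //.
  exact: fourier_pullback_morph g2K eq_FG.
apply: (fourier_pullback_morph (R := R) g1K) => h g.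
by rewrite (fourierC R (chi'' h)) eq_FG fourierC.
Qed.
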